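(* Let $q$ be a prime power, $r\ge 1$ an integer, and $\mathcal{S}$ a $q^r$-divisible spanning set of $q^{r+1}$ points in $\mathrm{PG}(v-1,q)$. Then the number of hyperplanes $H$ with $\mathcal{S}\cap H=\emptyset$ is at least $\frac{q^{v-r-1}-1}{q-1}$.
   Context: $\mathrm{PG}(v-1,q)$ is the projective space of $\mathbb{F}_q^v$; points are $1$-dimensional and hyperplanes $(v-1)$-dimensional subspaces of $\mathbb{F}_q^v$. A set $\mathcal{S}$ of points is spanning if its points span $\mathbb{F}_q^v$, and it is $q^r$-divisible if $|\mathcal{S}\cap H|\equiv|\mathcal{S}|\pmod{q^r}$ for every hyperplane $H$. *)

(* PG(v-1,q) over a finite field F with #|F| = q.
   Subspaces of F^v are represented canonically by square matrices A with
   <<A>>%MS = A (row space = the subspace; genmx is a canonical representative). *)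
From HB Require Import structures.
From mathcomp Require Import all_boot all_order all_algebra all_field.
Set Implicit Arguments. Unset Strict Implicit. Unset Printing Implicit Defensive.
Import GRing.Theory.
Local Open Scope ring_scope.

Definition is_point (F : finFieldType) (v : nat) (P : 'M[F]_v) : bool :=
  (\rank P == 1%N) && (<<P>>%MS == P).

Definition is_hyperplane (F : finFieldType) (v : nat) (H : 'M[F]_v) : bool :=
  (\rank H == v.-1) && (<<H>>%MS == H).

Definition point_set (F : finFieldType) (v : nat) (S : {set 'M[F]_v}) : Prop :=
  forall P, P \in S -> is_point P.

Definition card_in (F : finFieldType) (v : nat) (S : {set 'M[F]_v}) (H : 'M[F]_v) : nat :=
  #|[set P in S | (P <= H)%MS]|.

Definition spanning (F : finFieldType) (v : nat) (S : {set 'M[F]_v}) : Prop :=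
  \rank (\sum_(P in S) P)%MS = v.

Definition divisible (F : finFieldType) (v : nat) (S : {set 'M[F]_v}) (m : nat) : Prop :=
  forall H : 'M[F]_v, is_hyperplane H -> card_in S H = #|S| %[mod m].

(* We count dually with the vectors u of F^v.  Let N(u) be the number of
   points of S annihilated by the linear form u, i.e. lying in the hyperplane
   u^perp.  Double counting incidences gives the moment identities
       sum_u N(u)   = |S| q^(v-1),
       sum_u N(u)^2 = |S| (q^(v-1) + (|S|-1) q^(v-2)).
   For u <> 0, divisibility and the spanning hypothesis force N(u) = j q^r
   with 0 <= j < q, and j^2 + q - 1 <= q j when j > 0; summed over u this
   bounds the number B of nonzero u with N(u) > 0 by q^(v-r-1) (q^(r+1) - 1).
   Hence at least q^(v-r-1) - 1 nonzero u have N(u) = 0; each such u^perp is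
   skew to S, and a hyperplane has only q - 1 nonzero normal vectors. *)
From HB Require Import structures.
From mathcomp Require Import all_boot all_order all_algebra all_field zify.
Set Implicit Arguments. Unset Strict Implicit. Unset Printing Implicit Defensive.
Import GRing.Theory.

Lemma card_sep (T : finType) (A : {set T}) (p : pred T) :
  #|[set x in A | p x]| = (\sum_(x in A) p x)%N.
Proof.
rewrite -sum1_card big_mkcond [RHS]big_mkcond; apply: eq_bigr => x _.
by rewrite inE; case: (x \in A); case: (p x).
Qed.

Lemma card_sepT (T : finType) (p : pred T) : #|[set x | p x]| = (\sum_x p x)%N.
Proof.
by rewrite -sum1dep_card big_mkcond; apply: eq_bigr => x _; case: (p x).
Qed.

Lemma card_split_punctured (T : finType) (a : T) (p : pred T) :
  (#|[set x | (x != a) && p x]| + #|[set x | (x != a) && ~~ p x]| + 1 = #|T|)%N.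
Proof.
transitivity (#|[set~ a]| + 1)%N.
  congr (_ + _)%N; rewrite -(cardsID [set x | p x] [set~ a]).
  by congr (_ + _)%N; apply: eq_card => x; rewrite !inE; case: (x == a); case: (p x).
by rewrite cardsC1 addn1 prednK //; apply/card_gt0P; exists a.
Qed.

Lemma card_le_cover (T U : finType) (A : {set T}) (B : {set U}) (K : U -> {set T}) :
  (forall a, a \in A -> exists2 b, b \in B & a \in K b) ->
  (#|A| <= \sum_(b in B) #|K b|)%N.
Proof.
move=> coverA; apply: (@leq_trans #|\bigcup_(b in B) K b|).
  by apply/subset_leq_card/subsetP => a /coverA[b Bb Kb_a]; apply/bigcupP; exists b.
apply: (big_ind2 (fun (X : {set T}) n => #|X| <= n)%N) => //.
- by rewrite cards0.
- move=> X m Y n Xm Yn; apply: leq_trans (leq_card_setU X Y) _.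
  exact: leq_add.
Qed.

Local Open Scope ring_scope.

Section LinearCounting.
Variable F : finFieldType.

Lemma card_submx n m (A : 'M[F]_(m, n)) :
  #|[set u : 'rV[F]_n | (u <= A)%MS]| = (#|F| ^ \rank A)%N.
Proof.
rewrite -[\rank A]mul1n -card_mx.
have inj_base : injective (mulmxr (row_base A) : 'rV_(\rank A) -> 'rV_n).
  have /row_freeP[B baseK] := row_base_free A.
  by apply: (can_inj (g := mulmxr B)) => u; rewrite /= -mulmxA baseK mulmx1.
rewrite -(card_image inj_base); apply: eq_card => u.
by rewrite inE -(eq_row_base A) (sameP submxP codomP).
Qed.

Lemma card_kermx n m (M : 'M[F]_(n, m)) :
  #|[set u : 'rV[F]_n | u *m M == 0]| = (#|F| ^ (n - \rank M))%N.
Proof. by rewrite -mxrank_ker -card_submx; apply: eq_card => u; rewrite !inE sub_kermx. Qed.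

(* A point contained in a point is that point (points are canonical matrices). *)
Lemma point_sub_eq n (P P' : 'M[F]_n) :
  is_point P -> is_point P' -> (P <= P')%MS -> P = P'.
Proof.
move=> /andP[/eqP rP /eqP genP] /andP[/eqP rP' /eqP genP'] sPP'.
have [_] := mxrank_leqif_sup sPP'; rewrite rP rP' eqxx => sP'P.
by rewrite -genP -genP'; apply/genmxP; rewrite sPP' -sP'P.
Qed.

Lemma rank_two_points n (P P' : 'M[F]_n) :
  is_point P -> is_point P' -> P != P' -> \rank (col_mx P P') = 2%N.
Proof.
move=> pP pP' neqPP'; have /andP[/eqP rP _] := pP; have /andP[/eqP rP' _] := pP'.
rewrite -(addsmxE P P').
suff cap0 : \rank (P :&: P')%MS = 0%N.
  by have := mxrank_sum_cap P P'; rewrite rP rP' cap0 addn0.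
apply/eqP; apply: contraR neqPP' => cap_nz.
have [_] := mxrank_leqif_sup (capmxSl P P'); rewrite rP.
have -> : \rank (P :&: P')%MS = 1%N.
  by have := mxrankS (capmxSl P P'); rewrite rP; case: (\rank _) cap_nz => [|[]].
rewrite eqxx => /esym sP_cap; apply/eqP/point_sub_eq => //.
exact: submx_trans sP_cap (capmxSr P P').
Qed.

Definition orth n (u : 'rV[F]_n) (P : 'M[F]_n) : bool := u *m P^T == 0.

Lemma card_orth_point n (P : 'M[F]_n) : is_point P ->
  #|[set u : 'rV[F]_n | orth u P]| = (#|F| ^ n.-1)%N.
Proof. by case/andP=> /eqP rP _; rewrite card_kermx mxrank_tr rP subn1. Qed.

Lemma card_orth_two_points n (P P' : 'M[F]_n) : is_point P -> is_point P' -> P != P' ->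
  #|[set u : 'rV[F]_n | orth u P && orth u P']| = (#|F| ^ (n - 2))%N.
Proof.
move=> pP pP' neqPP'; rewrite -(rank_two_points pP pP' neqPP') -mxrank_tr -card_kermx.
by apply: eq_card => u; rewrite !inE tr_col_mx mul_mx_row row_mx_eq0.
Qed.

End LinearCounting.

Section Moments.
Variables (F : finFieldType) (v : nat) (S : {set 'M[F]_v}).
Hypothesis pointsS : point_set S.

Definition hits (u : 'rV[F]_v) : nat := #|[set P in S | orth u P]|.

(* First moment: each point lies in q^(v-1) of the spaces u^perp. *)
Lemma sum_hits : (\sum_u hits u = #|S| * #|F| ^ v.-1)%N.
Proof.
under eq_bigr do rewrite /hits card_sep.
rewrite exchange_big /= -sum_nat_const; apply: eq_bigr => P SP.
by rewrite -(card_orth_point (pointsS SP)) card_sepT.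
Qed.

(* Second moment: count ordered pairs of points, equal or distinct. *)
Lemma sum_hits_sq :
  (\sum_u hits u ^ 2 = #|S| * (#|F| ^ v.-1 + (#|S| - 1) * #|F| ^ (v - 2)))%N.
Proof.
under eq_bigr => u _.
  rewrite /hits card_sep -mulnn big_distrl /=.
  under eq_bigr => P _ do rewrite big_distrr /=.
  over.
rewrite exchange_big /= -sum_nat_const; apply: eq_bigr => P SP.
rewrite exchange_big /= (bigD1 P) //=; congr (_ + _)%N.
  rewrite -(card_orth_point (pointsS SP)) card_sepT.
  by apply: eq_bigr => u _; rewrite mulnb andbb.
rewrite (cardsD1 P S) SP add1n subn1 /= -sum_nat_const.
rewrite [RHS](eq_bigl (fun P' => (P' \in S) && (P' != P))); last first.
  by move=> P'; rewrite !inE andbC.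
apply: eq_bigr => P' /andP[SP' neqP'P].
rewrite -(card_orth_two_points (pointsS SP') (pointsS SP) neqP'P).
rewrite card_sepT; apply: eq_bigr => u _.
by rewrite mulnb andbC.
Qed.

End Moments.

(* For 0 < j < q, (j - 1)(q - 1 - j) >= 0, i.e. j^2 + q - 1 <= q j. *)
Lemma sq_plus_le (q j : nat) : (0 < j < q)%N -> (j * j + (q - 1) <= q * j)%N.
Proof. by move=> /andP[j_gt0 j_lt_q]; nia. Qed.

Lemma multiple_bound (q Q N : nat) : (Q %| N)%N -> (N < q * Q)%N ->
  (N ^ 2 + (q - 1) * (Q * Q) * (N != 0%N) <= q * Q * N)%N.
Proof.
case/dvdnP=> j ->; case: Q => [|Q]; first by rewrite !muln0.
rewrite ltn_pmul2r // => j_lt_q; case: j j_lt_q => [|j] j_lt_q; first by rewrite !(mul0n, muln0).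
rewrite muln_eq0 /= muln1.
have := leq_mul (leqnn (Q.+1 * Q.+1)) (@sq_plus_le q j.+1 j_lt_q); nia.
Qed.

Section DualHyperplanes.
Variables (F : finFieldType) (v : nat).

Definition perp (u : 'rV[F]_v) : 'M[F]_v := <<kermx u^T>>%MS.

Lemma perp_hyperplane u : u != 0 -> is_hyperplane (perp u).
Proof.
move=> u_nz; rewrite /is_hyperplane /perp mxrank_gen mxrank_ker mxrank_tr.
by rewrite rank_rV u_nz subn1 genmx_id !eqxx.
Qed.

Lemma sub_perp (P : 'M[F]_v) u : (P <= perp u)%MS = orth u P.
Proof. by rewrite /perp genmxE sub_kermx /orth -trmx_eq0 trmx_mul trmxK. Qed.

Definition normals (H : 'M[F]_v) : {set 'rV[F]_v} := [set u | orth u H] :\ 0.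

Lemma card_normals H : (0 < v)%N -> is_hyperplane H -> #|normals H| = (#|F| - 1)%N.
Proof.
move=> v_gt0 /andP[/eqP rH _]; have := cardsD1 0 [set u : 'rV[F]_v | orth u H].
rewrite card_kermx mxrank_tr rH inE /orth mul0mx eqxx -subn1 subKn // expn1 => ->.
by rewrite addKn.
Qed.

Variable S : {set 'M[F]_v}.

Lemma hits_card_in u : hits S u = card_in S (perp u).
Proof. by apply: eq_card => P; rewrite !inE sub_perp. Qed.

Lemma hits0 : hits S 0 = #|S|.
Proof. by apply: eq_card => P; rewrite !inE /orth mul0mx eqxx andbT. Qed.

Lemma hits_lt u : spanning S -> u != 0 -> (hits S u < #|S|)%N.
Proof.
move=> spanS u_nz; rewrite ltn_neqAle; apply/andP; split; last first.
  by apply/subset_leq_card/subsetP => P; rewrite inE => /andP[].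
apply/negP => /eqP hitsS.
have allS : [set P in S | orth u P] = S.
  apply/eqP; rewrite eqEcard -/(hits S u) hitsS leqnn andbT.
  by apply/subsetP => P; rewrite inE => /andP[].
have sumS : (\sum_(P in S) P <= perp u)%MS.
  by apply/sumsmx_subP => P SP; rewrite sub_perp; move: SP; rewrite -allS inE => /andP[].
have := mxrankS sumS; have := rank_leq_col u.
by rewrite spanS mxrank_gen mxrank_ker mxrank_tr rank_rV u_nz /=; lia.
Qed.

Lemma hits_dvd r u : divisible S (#|F| ^ r) -> #|S| = (#|F| ^ r.+1)%N -> u != 0 ->
  (#|F| ^ r %| hits S u)%N.
Proof.
move=> divS cardS u_nz; rewrite hits_card_in /dvdn (divS _ (perp_hyperplane u_nz)).
by rewrite cardS expnS modnMl.
Qed.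

(* Summing the pointwise bound over all forms u (the form 0 contributes
   |S|^2 on both sides): with Q = q^r,
   sum_u N(u)^2 + (q-1) Q^2 #{u <> 0 | N(u) > 0} <= |S| sum_u N(u). *)
Lemma sum_hits_bound r : spanning S -> divisible S (#|F| ^ r) ->
  #|S| = (#|F| ^ r.+1)%N ->
  (\sum_u hits S u ^ 2 + (#|F| - 1) * (#|F| ^ r * #|F| ^ r)
     * #|[set u : 'rV[F]_v | (u != 0%R) && (hits S u != 0%N)]|
   <= #|S| * \sum_u hits S u)%N.
Proof.
move=> spanS divS cardS; rewrite card_sepT big_distrr -big_split big_distrr /=.
apply: leq_sum => u _; have [->|u_nz] := eqVneq u 0.
  by rewrite hits0 /= muln0 addn0 -mulnn.
rewrite /= cardS (expnS #|F| r); apply: multiple_bound; first exact: hits_dvd divS cardS u_nz.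
by rewrite -expnS -cardS; apply: hits_lt.
Qed.

(* Each nonzero u with no hits gives a skew hyperplane having u as a normal,
   so such u are at most (q - 1) times the number of skew hyperplanes. *)
Lemma card_missing_forms : (0 < v)%N ->
  (#|[set u : 'rV[F]_v | (u != 0%R) && (hits S u == 0%N)]| <=
   #|[set H : 'M[F]_v | is_hyperplane H & [forall P in S, ~~ (P <= H)%MS]]|
     * (#|F| - 1))%N.
Proof.
move=> v_gt0; rewrite -sum_nat_const.
rewrite (eq_bigr (fun H => #|normals H|)); last first.
  by move=> H; rewrite inE => /andP[/(card_normals v_gt0)].
apply: card_le_cover => u; rewrite inE => /andP[u_nz /eqP /cards0_eq missS].
exists (perp u); last by rewrite !inE u_nz -sub_perp submx_refl.
rewrite inE perp_hyperplane //=; apply/forall_inP => P SP; rewrite sub_perp.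
by apply: contra_eqN missS => orthP; apply/set0Pn; exists P; rewrite inE SP.
Qed.

End DualHyperplanes.

(* Dividing the summed pointwise bound by (q - 1) Q^2, where |S| = q Q and
   z = q^(v-r-2) so that q^(v-1) = q Q z and q^(v-2) = Q z: at most
   q z (q Q - 1) nonzero forms have hits. *)
Lemma nonskew_bound (q Q z B : nat) : (1 < q)%N -> (0 < Q)%N ->
  (q * Q * (q * Q * z + (q * Q - 1) * (Q * z)) + (q - 1) * (Q * Q) * B
     <= q * Q * (q * Q * (q * Q * z)))%N ->
  (B + q * z <= q * q * Q * z)%N.
Proof.
move=> q_gt1 Q_gt0; set t := (q * Q - 1)%N.
have qQ : (q * Q = t.+1)%N by rewrite /t; nia.
have -> : (q * Q * (q * Q * z + t * (Q * z)) + (q - 1) * (Q * Q) * B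
           = Q * Q * (q * q * z + q * t * z + (q - 1) * B))%N by nia.
have -> : (q * Q * (q * Q * (q * Q * z))
           = Q * Q * (q * q * z + q * t * z + (q - 1) * (q * t * z)))%N by nia.
rewrite leq_pmul2l ?muln_gt0 ?Q_gt0 // leq_add2l leq_pmul2l ?subn_gt0 //.
nia.
Qed.

Theorem mainTheorem4 (F : finFieldType) (v r : nat) (S : {set 'M[F]_v}) :
  (1 <= r)%N ->
  point_set S ->
  spanning S ->
  divisible S (#|F| ^ r) ->
  #|S| = (#|F| ^ r.+1)%N ->
  ((#|F| ^ (v - r - 1) - 1) %/ (#|F| - 1) <=
     #|[set H : 'M[F]_v | is_hyperplane H & [forall P in S, ~~ (P <= H)%MS]]|)%N.
Proof.
move=> _ pointsS spanS divS cardS.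
have [v_small|v_big] := leqP v r.+1.
  by rewrite (_ : v - r - 1 = 0)%N ?expn0 ?subnn ?div0n //; lia.
have q_gt1 : (1 < #|F|)%N by apply/card_gt1P; exists 0, 1; rewrite eq_sym oner_eq0.
have summed := sum_hits_bound spanS divS cardS.
rewrite sum_hits_sq // sum_hits // cardS in summed.
set q := #|F| in q_gt1 summed *; set Q := (q ^ r)%N; set z := (q ^ (v - r.+2))%N.
have expE k : (q ^ (k + (v - r.+2)) = q ^ k * z)%N by rewrite expnD.
have [vE v1E v2E vr1E] : [/\ v = 2 + r + (v - r.+2), v.-1 = 1 + r + (v - r.+2),
    v - 2 = r + (v - r.+2) & v - r - 1 = 1 + (v - r.+2)]%N by split; lia.
set B := #|[set u : 'rV[F]_v | (u != 0) && (hits S u != 0%N)]| in summed.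
set A := #|[set u : 'rV[F]_v | (u != 0) && (hits S u == 0%N)]|.
have B_le : (B + q * z <= q * q * Q * z)%N.
  have Q_gt0 : (0 < Q)%N by rewrite expn_gt0 (ltnW q_gt1).
  apply: nonskew_bound q_gt1 Q_gt0 _; move: summed.
  by rewrite v1E v2E !expE add1n expnS -/Q.
have A_ge : (q * z - 1 <= A)%N.
  have qv : (q ^ v = q * q * Q * z)%N by rewrite {1}vE expE !expnS mulnA.
  have := card_split_punctured 0 (fun u : 'rV[F]_v => hits S u == 0%N).
  rewrite card_mx mul1n -/q -/A -/B qv; lia.
have A_le := card_missing_forms S (leq_ltn_trans (leq0n _) v_big).
rewrite vr1E expE expn1.
apply: leq_trans (leq_div2r (q - 1) (leq_trans A_ge A_le)) _.
by rewrite mulnK // subn_gt0.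
Qed.
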